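(* Let $k\ge0$ and let $s$ be the singular factor of length $q_k$ of slope $\alpha$. Then (i) $s$ begins and ends with the same letter; (ii) $s$ is a palindrome; and (iii) the Parikh vectors of the proper prefixes and of the proper suffixes of $s$ are contained in the Parikh vector of every factor of slope $\alpha$ of length $q_k$.
   Context: $\alpha\in(0,1)$ irrational, $\alpha=[0;a_1,a_2,\ldots]$ with positive integers $a_i$, $a_1\ge2$; $q_0=1$, $q_1=a_1$, $q_k=a_kq_{k-1}+q_{k-2}$ ($k\ge2$). Identify the circle $\mathbb{T}$ with $[0,1)$, $R(\rho)=\{\rho+\alpha\}$; fix one convention, $I_0=[0,1-\alpha)$, $I_1=[1-\alpha,1)$ or $I_0=(0,1-\alpha]$, $I_1=(1-\alpha,1]$. $\mathbf{s}_{\rho,\alpha}$ has $n$-th letter $0$ if $R^n(\rho)\in I_0$ and $1$ otherwise; all such words share the set $\mathcal{L}_\alpha$ of finite factors (factors of slope $\alpha$). For $w=b_0\cdots b_{n-1}\in\mathcal{L}_\alpha$, $[w]=\bigcap_{i=0}^{n-1}R^{-i}(I_{b_i})$, so $\mathbf{s}_{\rho,\alpha}$ begins with $w$ iff $\rho\in[w]$; the intervals $[w]$ with $|w|=n$ are the $n+1$ arcs cut out by $0,\{-\alpha\},\ldots,\{-n\alpha\}$. The singular factor of length $q_k$ is the unique $s\in\mathcal{L}_\alpha$ of length $q_k$ whose interval $[s]$ has endpoints $0$ and $\{-q_k\alpha\}$. A proper prefix (suffix) of $s$ is a nonempty prefix (suffix) different from $s$. The Parikh vector of a binary word $u$ is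 $(|u|_0,|u|_1)$; $P$ is contained in $Q$ if $P\le Q$ componentwise and $P\ne Q$. *)

From Stdlib Require Import Reals.
From mathcomp Require Import ssreflect ssrbool ssrfun eqtype ssrnat seq.

Set Implicit Arguments.
Unset Strict Implicit.

Fixpoint gauss (alpha : R) (n : nat) : R :=
  match n with
  | O => alpha
  | S m => frac_part (/ gauss alpha m)
  end.

(* partial quotients: cf_a alpha (n+1) = floor (1 / T^n alpha), so that
   alpha = [0; cf_a alpha 1, cf_a alpha 2, ...].  (cf_a alpha 0 = 0.) *)
Definition cf_a (alpha : R) (n : nat) : nat :=
  match n with
  | O => 0
  | S m => Z.to_nat (Int_part (/ gauss alpha m))
  end.

(* (q_k, q_{k+1}) with q_0 = 1, q_1 = a_1, q_k = a_k q_{k-1} + q_{k-2}. *)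
Fixpoint cf_q_pair (alpha : R) (k : nat) : nat * nat :=
  match k with
  | O => (1, cf_a alpha 1)
  | S m => let p := cf_q_pair alpha m in
           (p.2, cf_a alpha (m.+2) * p.2 + p.1)
  end.

Definition cf_q (alpha : R) (k : nat) : nat := (cf_q_pair alpha k).1.

Definition irrational (x : R) : Prop :=
  forall (p q : Z), q <> 0%Z -> x <> (IZR p / IZR q)%R.

(* Convention flag conv:
   conv = false : circle = [0,1), I_0 = [0,1-alpha), I_1 = [1-alpha,1);
   conv = true  : circle = (0,1], I_0 = (0,1-alpha], I_1 = (1-alpha,1].
   Letters: false = 0, true = 1. *)
Definition fracu (x : R) : R := (1 - frac_part (- x))%R.  (* representative in (0,1] *)

Definition letter (conv : bool) (alpha rho : R) (n : nat) : bool :=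
  let x := (rho + INR n * alpha)%R in
  if conv then
    (if Rlt_dec (1 - alpha) (fracu x) then true else false)
  else
    (if Rle_dec (1 - alpha) (frac_part x) then true else false).

Definition factor (conv : bool) (alpha : R) (w : seq bool) : Prop :=
  exists (rho : R) (m : nat),
    w = mkseq (fun i => letter conv alpha rho (m + i)) (size w).

Definition in_cyl (conv : bool) (alpha : R) (w : seq bool) (rho : R) : Prop :=
  mkseq (fun i => letter conv alpha rho i) (size w) = w.

(* s is a singular factor of length q_k: s is a factor of length q_k whose
   interval [s] has endpoints 0 and beta = {-q_k alpha}, i.e. (up to the
   endpoints themselves) [s] is one of the two arcs determined by 0 and beta. *)
Definition singular_factor (conv : bool) (alpha : R) (k : nat) (s : seq bool) : Prop :=
  factor conv alpha s /\ size s = cf_q alpha k /\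
  let beta := frac_part (- (INR (cf_q alpha k) * alpha)) in
  ((forall rho, (0 < rho < 1)%R -> rho <> beta -> (in_cyl conv alpha s rho <-> (rho < beta)%R))
   \/
   (forall rho, (0 < rho < 1)%R -> rho <> beta -> (in_cyl conv alpha s rho <-> (beta < rho)%R))).

Definition parikh (u : seq bool) : nat * nat := (count negb u, count (fun b : bool => b) u).

Definition parikh_contained (P Q : nat * nat) : Prop :=
  (P.1 <= Q.1)%N /\ (P.2 <= Q.2)%N /\ P <> Q.

Definition proper_prefix (u s : seq bool) : Prop :=
  exists i, (0 < i < size s)%N /\ u = take i s.

Definition proper_suffix (u s : seq bool) : Prop :=
  exists i, (0 < i < size s)%N /\ u = drop i s.

From Stdlib Require Import Reals ZArith Lra Lia.
From mathcomp Require Import ssreflect ssrbool ssrfun eqtype ssrnat seq.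
From mathcomp Require Import zify.

Set Implicit Arguments.
Unset Strict Implicit.

(* Pick a rational point rho of [s] next to the endpoint 0 of the circle (being
   rational, its orbit never returns to 0, so both conventions code it alike)
   and a point rho' of [s] with rho + rho' = -q_k alpha (mod 1).  Reflecting
   the orbit of rho' through -alpha/2 turns the coding of rho' read forwards
   into the coding of rho read backwards, so s is a palindrome.  Since rho lies
   on the same side of {-q_k alpha} as of 1 - alpha, the telescoping floor
   formula gives s exactly floor(q_k alpha) + b ones, b its first letter, while
   every factor of length q_k has floor(q_k alpha) or one more.  Deleting the
   last letter b of s thus leaves a word whose Parikh vector lies below that of
   every factor of length q_k, and so do all proper prefixes; proper suffixes
   follow by the palindrome property. *)

Local Notation ones := (count (fun b : bool => b)).

Lemma b2Z_inj (b1 b2 : bool) : Z.of_nat b1 = Z.of_nat b2 -> b1 = b2.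
Proof. by case: b1; case: b2. Qed.

Lemma count_take_leq (p : pred bool) i (s : seq bool) : count p (take i s) <= count p s.
Proof. by rewrite -{2}(cat_take_drop i s) count_cat leq_addr. Qed.

Lemma parikh_rev (s : seq bool) : parikh (rev s) = parikh s.
Proof. by rewrite /parikh !count_rev. Qed.

Lemma head_palindrome (s : seq bool) : rev s = s -> head false s = last false s.
Proof.
case: s => [|x s] // pal.
by rewrite -nth0 -nth_last -{1}pal nth_rev //= subn1.
Qed.

Lemma parikh_take_contained (s w : seq bool) i :
  0 < i < size s -> size w = size s ->
  ones s <= ones w + last false s <= (ones s).+1 ->
  parikh_contained (parikh (take i s)) (parikh w).
Proof.
case/lastP: s => [|s x]; first by rewrite ltn0 andbF.
rewrite size_rcons last_rcons => lt_i_s size_w.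
rewrite -cats1 count_cat /= addn0 takel_cat; last by lia.
have zeros_ones u : count negb u + ones u = size u.
  by elim: u => //= b u IH; case: b; lia.
have := zeros_ones (take i s); rewrite size_takel; last by lia.
have := zeros_ones s; have := zeros_ones w.
have := count_take_leq negb i s; have := count_take_leq (fun b : bool => b) i s.
rewrite /parikh_contained /parikh /= => *.
by split; [lia | split; [lia | case=> *; lia]].
Qed.

Lemma cf_q_gt0 alpha k : (0 < cf_a alpha 1) -> (0 < cf_q alpha k).
Proof.
move=> a1_gt0; suff: (0 < (cf_q_pair alpha k).1) /\ (0 < (cf_q_pair alpha k).2) by case.
elim: k => [|k [q_gt0 q'_gt0]] //=; split=> //.
exact: leq_trans q_gt0 (leq_addl _ _).
Qed.

Local Open Scope R_scope.

Lemma Int_part_bounds x : IZR (Int_part x) <= x < IZR (Int_part x) + 1.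
Proof. by have [] := base_Int_part x; lra. Qed.

Lemma Int_part_IZR_add (K : Z) x : Int_part (IZR K + x) = (K + Int_part x)%Z.
Proof.
symmetry; apply: Int_part_spec.
by have := Int_part_bounds x; rewrite plus_IZR; lra.
Qed.

Lemma Int_part_opp x : (forall K, x <> IZR K) -> Int_part (- x) = (- Int_part x - 1)%Z.
Proof.
move=> x_nonint; symmetry; apply: Int_part_spec.
have [[lt_x | eq_x] x_lt] := Int_part_bounds x; last by case: (x_nonint _ (esym eq_x)).
by rewrite minus_IZR opp_IZR; lra.
Qed.

Lemma Int_part_add_bounds z t :
  (Int_part t <= Int_part (z + t) - Int_part z <= Int_part t + 1)%Z.
Proof.
have := Int_part_bounds z; have := Int_part_bounds t; have := Int_part_bounds (z + t).
move=> zt_bds t_bds z_bds.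
have lo : (Int_part z + Int_part t - 1 < Int_part (z + t))%Z.
  by apply: lt_IZR; rewrite minus_IZR plus_IZR; lra.
have hi : (Int_part (z + t) < Int_part z + Int_part t + 2)%Z.
  by apply: lt_IZR; rewrite (plus_IZR _ 2) plus_IZR; lra.
lia.
Qed.

Lemma Int_part_add_unit_interval x t : 0 <= x < 1 -> (forall K, t <> IZR K) ->
  Int_part (x + t) = (Int_part t + if Rle_dec (frac_part (- t)) x then 1 else 0)%Z.
Proof.
move=> x01 t_nonint.
have frac_opp : frac_part (- t) = IZR (Int_part t) + 1 - t.
  by rewrite /frac_part Int_part_opp // minus_IZR opp_IZR; ring.
have t_bds := Int_part_bounds t.
symmetry; apply: Int_part_spec.
by case: Rle_dec => side /=; [rewrite plus_IZR | rewrite Z.add_0_r]; lra.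
Qed.

Section Rotation.

Variable a : R.
Hypothesis a01 : 0 < a < 1.

Definition rot_letter (conv : bool) (x : R) : bool :=
  if conv then (if Rlt_dec (1 - a) (fracu x) then true else false)
  else (if Rle_dec (1 - a) (frac_part x) then true else false).

Lemma letterE conv rho n : letter conv a rho n = rot_letter conv (rho + INR n * a).
Proof. by []. Qed.

Lemma rot_letter_Z conv x :
  Z.of_nat (rot_letter conv x) =
  (if conv then Int_part (- x) - Int_part (- x - a) else Int_part (x + a) - Int_part x)%Z.
Proof.
rewrite /rot_letter /fracu /frac_part; case: conv.
- have := Int_part_bounds (- x); case: Rlt_dec => side bds /=.
  + rewrite -(Int_part_spec (- x - a) (Int_part (- x) - 1)); first lia.
    by rewrite minus_IZR; lra.
  + by rewrite -(Int_part_spec (- x - a) (Int_part (- x))); [lia | lra].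
- have := Int_part_bounds x; case: Rle_dec => side bds /=.
  + rewrite -(Int_part_spec (x + a) (Int_part x + 1)); first lia.
    by rewrite plus_IZR; lra.
  + by rewrite -(Int_part_spec (x + a) (Int_part x)); [lia | lra].
Qed.

Lemma rot_letter_conv_irrelevant conv x :
  (forall K, x <> IZR K) -> (forall K, x + a <> IZR K) ->
  rot_letter conv x = rot_letter false x.
Proof.
move=> x_nonint xa_nonint; case: conv => //; apply: b2Z_inj.
rewrite !rot_letter_Z /=.
have -> : - x - a = - (x + a) by ring.
by rewrite !Int_part_opp //; lia.
Qed.

Lemma rot_letter_reflect conv (K : Z) y :
  rot_letter conv (IZR K - a - y) = rot_letter (~~ conv) y.
Proof.
apply: b2Z_inj; rewrite !rot_letter_Z; case: conv => /=.
- have -> : - (IZR K - a - y) - a = IZR (- K) + y by rewrite opp_IZR; ring.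
  have -> : - (IZR K - a - y) = IZR (- K) + (y + a) by rewrite opp_IZR; ring.
  by rewrite !Int_part_IZR_add; lia.
- have -> : IZR K - a - y + a = IZR K + - y by ring.
  have -> : IZR K - a - y = IZR K + (- y - a) by ring.
  by rewrite !Int_part_IZR_add; lia.
Qed.

Lemma ones_window conv x m :
  Z.of_nat (ones (mkseq (fun i => rot_letter conv (x + INR i * a)) m)) =
  (if conv then Int_part (- x) - Int_part (- x - INR m * a)
   else Int_part (x + INR m * a) - Int_part x)%Z.
Proof.
elim: m => [|m IH].
  by case: conv => /=; rewrite Rmult_0_l ?Rplus_0_r ?Rminus_0_r; lia.
rewrite mkseqS S_INR -cats1 count_cat /= addn0 Nat2Z.inj_add IH rot_letter_Z.
case: conv {IH}.
- have -> : - (x + INR m * a) - a = - x - (INR m + 1) * a by ring.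
  have -> : - (x + INR m * a) = - x - INR m * a by ring.
  lia.
- have -> : x + INR m * a + a = x + (INR m + 1) * a by ring.
  lia.
Qed.

Lemma factor_ones_bounds conv w : factor conv a w ->
  (Int_part (INR (size w) * a) <= Z.of_nat (ones w) <= Int_part (INR (size w) * a) + 1)%Z.
Proof.
move=> [rho [m w_eq]].
have -> : w = mkseq (fun i => rot_letter conv ((rho + INR m * a) + INR i * a)) (size w).
  by rewrite {1}w_eq; apply: eq_mkseq => i; rewrite letterE plus_INR; f_equal; ring.
rewrite size_mkseq ones_window; case: conv {w_eq}; last exact: Int_part_add_bounds.
have := Int_part_add_bounds (- (rho + INR m * a) - INR (size w) * a) (INR (size w) * a).
by rewrite Rplus_assoc Rplus_opp_l Rplus_0_r.
Qed.

Definition orbit_avoids_zero (rho : R) : Prop :=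
  forall (j : nat) (K : Z), rho + INR j * a <> IZR K.

Lemma rat_add_mul_irrational_nonint p q j K : irrational a -> q <> 0%Z -> (0 < j)%N ->
  IZR p / IZR q + INR j * a <> IZR K.
Proof.
move=> irr q_neq0 j_gt0 orbit_eq.
have q_neq0R : IZR q <> 0 by apply: not_0_IZR.
have j_neq0R : INR j <> 0 by apply: not_0_INR; lia.
apply: (irr (K * q - p)%Z (q * Z.of_nat j)%Z); first lia.
have -> : a = (IZR K - IZR p / IZR q) / INR j by rewrite -orbit_eq; field.
by rewrite minus_IZR !mult_IZR -INR_IZR_INZ; field.
Qed.

Lemma nat_mul_irrational_nonint j K : irrational a -> (0 < j)%N -> INR j * a <> IZR K.
Proof.
move=> irr j_gt0; have := @rat_add_mul_irrational_nonint 0 1 j K irr ltac:(lia) j_gt0.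
by rewrite /Rdiv Rmult_0_l Rplus_0_l.
Qed.

Lemma rational_orbit_avoids_zero p q : irrational a -> q <> 0%Z ->
  0 < IZR p / IZR q < 1 -> orbit_avoids_zero (IZR p / IZR q).
Proof.
move=> irr q_neq0 rho01 [|j] K; last exact: rat_add_mul_irrational_nonint.
rewrite Rmult_0_l Rplus_0_r => rho_eq; rewrite rho_eq in rho01.
by case: rho01 => /lt_IZR ? /lt_IZR ?; lia.
Qed.

Lemma rot_letter_orbit conv rho i : orbit_avoids_zero rho ->
  rot_letter conv (rho + INR i * a) = rot_letter false (rho + INR i * a).
Proof.
move=> rho_gen; apply: rot_letter_conv_irrelevant => // K.
by rewrite Rplus_assoc -{2}(Rmult_1_l a) -Rmult_plus_distr_r -S_INR.
Qed.

Lemma in_cyl_generic conv s rho : orbit_avoids_zero rho -> in_cyl conv a s rho ->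
  s = mkseq (fun i => rot_letter false (rho + INR i * a)) (size s).
Proof.
move=> rho_gen s_rho; rewrite -{1}s_rho; apply: eq_mkseq => i.
by rewrite letterE rot_letter_orbit.
Qed.

Lemma rev_of_reflected_cylinders conv s rho rho' (e : Z) :
  orbit_avoids_zero rho -> in_cyl conv a s rho -> in_cyl conv a s rho' ->
  rho + rho' = IZR e - INR (size s) * a -> rev s = s.
Proof.
move=> rho_gen s_rho s_rho' sum_eq.
have s_eq := in_cyl_generic rho_gen s_rho.
apply: (@eq_from_nth _ false); first by rewrite size_rev.
move=> i; rewrite size_rev => lt_i_s.
set j := (size s - i.+1)%N.
have size_s : INR (size s) = INR i + 1 + INR j by rewrite -S_INR -plus_INR /j; f_equal; lia.
have reflect_i : rho' + INR i * a = IZR e - a - (rho + INR j * a).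
  by rewrite -(Rplus_minus_r rho rho') sum_eq size_s; ring.
rewrite nth_rev // -/j -{2}s_rho' nth_mkseq // letterE reflect_i rot_letter_reflect.
by rewrite rot_letter_orbit // {1}s_eq nth_mkseq; last by rewrite /j; lia.
Qed.

Lemma ones_cylinder conv s rho :
  orbit_avoids_zero rho -> 0 <= rho < 1 -> (forall K, INR (size s) * a <> IZR K) ->
  (frac_part (- (INR (size s) * a)) <= rho <-> 1 - a <= rho) ->
  in_cyl conv a s rho ->
  Z.of_nat (ones s) = (Int_part (INR (size s) * a) + Z.of_nat (head false s))%Z.
Proof.
move=> rho_gen rho01 na_nonint side s_rho.
have s_eq := in_cyl_generic rho_gen s_rho.
have size_gt0 : (0 < size s)%N.
  rewrite lt0n; apply/eqP => size0; apply: (na_nonint 0%Z).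
  by rewrite size0 Rmult_0_l.
have head_s : head false s = rot_letter false rho.
  by rewrite -nth0 {1}s_eq nth_mkseq // Rmult_0_l Rplus_0_r.
have int_rho : Int_part rho = 0%Z by symmetry; apply: Int_part_spec; lra.
rewrite head_s {1}s_eq ones_window Int_part_add_unit_interval // int_rho.
rewrite /rot_letter /frac_part int_rho Rminus_0_r.
by case: Rle_dec => ?; case: Rle_dec => ? /=; try lia; exfalso; tauto.
Qed.

Lemma singular_reflected_points conv n s : irrational a ->
  (forall K, INR n * a <> IZR K) ->
  (let beta := frac_part (- (INR n * a)) in
   (forall rho, 0 < rho < 1 -> rho <> beta -> (in_cyl conv a s rho <-> rho < beta)) \/
   (forall rho, 0 < rho < 1 -> rho <> beta -> (in_cyl conv a s rho <-> beta < rho))) ->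
  exists rho rho' (e : Z),
    [/\ orbit_avoids_zero rho /\ 0 <= rho < 1,
        frac_part (- (INR n * a)) <= rho <-> 1 - a <= rho,
        in_cyl conv a s rho, in_cyl conv a s rho' & rho + rho' = IZR e - INR n * a].
Proof.
move=> irr na_nonint /=; set beta := frac_part _ => arcs.
have beta_eq : beta = - IZR (Int_part (- (INR n * a))) - INR n * a.
  by rewrite /beta /frac_part; ring.
have [beta_ge0 beta_lt1] : beta >= 0 /\ beta < 1 := base_fp _.
have beta_pos : 0 < beta.
  apply: Rnot_le_lt => beta_le0.
  have [K K_eq] := fp_nat (- (INR n * a)) ltac:(rewrite -/beta; lra).
  by apply: (na_nonint (- K)%Z); rewrite opp_IZR -K_eq; ring.
case: arcs => arc.
- have min_pos : 0 < Rmin beta (1 - a) by apply: Rmin_pos; lra.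
  have [N [N_small N_gt0]] := archimed_cor1 _ min_pos.
  have [min_l min_r] := (Rmin_l beta (1 - a), Rmin_r beta (1 - a)).
  have N_pos : 0 < / INR N by apply/Rinv_0_lt_compat/lt_0_INR.
  have rho_eq : / INR N = IZR 1 / IZR (Z.of_nat N).
    by rewrite -INR_IZR_INZ /Rdiv Rmult_1_l.
  exists (/ INR N), (beta - / INR N), (- Int_part (- (INR n * a)))%Z.
  split; first split; try lra.
  + by rewrite rho_eq; apply: rational_orbit_avoids_zero => //; [lia | rewrite -rho_eq; lra].
  + by apply/(arc (/ INR N)); lra.
  + by apply/(arc (beta - / INR N)); lra.
  + by rewrite opp_IZR; lra.
- have min_pos : 0 < Rmin (1 - beta) a by apply: Rmin_pos; lra.
  have [N [N_small N_gt0]] := archimed_cor1 _ min_pos.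
  have [min_l min_r] := (Rmin_l (1 - beta) a, Rmin_r (1 - beta) a).
  have N_pos : 0 < / INR N by apply/Rinv_0_lt_compat/lt_0_INR.
  have rho_eq : 1 - / INR N = IZR (Z.of_nat N - 1) / IZR (Z.of_nat N).
    by rewrite minus_IZR -INR_IZR_INZ; field; apply: not_0_INR; lia.
  exists (1 - / INR N), (beta + / INR N), (1 - Int_part (- (INR n * a)))%Z.
  split; first split; try lra.
  + by rewrite rho_eq; apply: rational_orbit_avoids_zero => //; [lia | rewrite -rho_eq; lra].
  + by apply/(arc (1 - / INR N)); lra.
  + by apply/(arc (beta + / INR N)); lra.
  + by rewrite minus_IZR; lra.
Qed.

End Rotation.

Theorem lemma2p5 (conv : bool) (alpha : R)
  (Ha : (0 < alpha < 1)%R) (Hirr : irrational alpha)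
  (Ha1 : (2 <= cf_a alpha 1)%N)
  (k : nat) (s : seq bool) (Hs : singular_factor conv alpha k s) :
  (s <> [::] /\ head false s = last false s) /\
  rev s = s /\
  (forall u w : seq bool,
     (proper_prefix u s \/ proper_suffix u s) ->
     factor conv alpha w -> size w = cf_q alpha k ->
     parikh_contained (parikh u) (parikh w)).
Proof.
case: Hs => _ [size_s arcs]; rewrite -size_s in arcs *.
have size_gt0 : (0 < size s)%N by rewrite size_s; apply/cf_q_gt0/ltnW.
have na_nonint K : INR (size s) * alpha <> IZR K := nat_mul_irrational_nonint Hirr size_gt0.
have [rho [rho' [e [[rho_gen rho01] rho_side s_rho s_rho' sum_eq]]]] :=
  singular_reflected_points Ha Hirr na_nonint arcs.
have pal := rev_of_reflected_cylinders Ha rho_gen s_rho s_rho' sum_eq.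
have ones_s := ones_cylinder Ha rho_gen rho01 na_nonint rho_side s_rho.
have head_last := head_palindrome pal.
split; [split=> // s_nil | split=> // u w u_affix w_factor size_w].
  by rewrite s_nil in size_gt0.
have := factor_ones_bounds Ha w_factor; rewrite size_w head_last in ones_s * => ones_w.
have ones_bds : (ones s <= ones w + last false s <= (ones s).+1)%N by lia.
case: u_affix => [[i [lt_i_s ->]] | [i [lt_i_s ->]]].
  exact: parikh_take_contained.
rewrite -{1}pal drop_rev parikh_rev.
by apply: parikh_take_contained => //; lia.
Qed.
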